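(* Let $E\in\mathbb R$, $\eta>0$ and $n\ge0$. Then, in the sense of quadratic forms, $$\tilde\Gamma(0)\ \ge\ \sum_{x\in S_n}\ \sum_{y\in\mathcal N_x^+}G(0,x;E+i\eta)\,\tilde\Gamma(y)\,G(0,x;E+i\eta)^*.$$
   Context: Let $K\ge 2$ be an integer and let $\mathcal T$ be the rooted tree with root $0$ in which every vertex has exactly $K$ children. $x_-$ denotes the parent of $x$, $\mathcal N_x^+$ the set of children of $x$, and $S_n$ the set of vertices at distance $n$ from $0$. $H$ acts on $\ell^2(\mathcal T;\mathbb C^W)$ with blocks $I_W$ between adjacent vertices, Hermitian matrices $U(x)$ on the diagonal, and $0$ otherwise. $G(x,y;z)$ is the $(x,y)$ block of $(H-z)^{-1}$. For $y\ne0$, $\Gamma(y)=G^{\mathcal T_{y_-}}(y,y;E+i\eta)$, the $(y,y)$ block of the resolvent of the restriction of $H$ to the tree with $y_-$ deleted. Also $\Gamma(0)=G(0,0;E+i\eta)$, and $\tilde\Gamma(y)=(\Gamma(y)-\Gamma(y)^* )/(2i)$. *)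

From Stdlib Require Import Reals List.
Import ListNotations.
Open Scope R_scope.

Record C := mkC { Re : R; Im : R }.
Definition C0 : C := mkC 0 0.
Definition C1 : C := mkC 1 0.
Definition Cadd (a b : C) : C := mkC (Re a + Re b) (Im a + Im b).
Definition Copp (a : C) : C := mkC (- Re a) (- Im a).
Definition Cmul (a b : C) : C :=
  mkC (Re a * Re b - Im a * Im b) (Re a * Im b + Im a * Re b).
Definition Cconj (a : C) : C := mkC (Re a) (- Im a).
Definition Cnorm2 (a : C) : R := Re a * Re a + Im a * Im a.

Fixpoint Csum (n : nat) (f : nat -> C) : C :=
  match n with O => C0 | S m => Cadd (Csum m f) (f m) end.

(** * W x W complex matrices: entries with indices < W are meaningful *)
Definition Mat := nat -> nat -> C.
Definition mzero : Mat := fun _ _ => C0.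
Definition mid : Mat := fun i j => if Nat.eqb i j then C1 else C0.
Definition madd (A B : Mat) : Mat := fun i j => Cadd (A i j) (B i j).
Definition msub (A B : Mat) : Mat := fun i j => Cadd (A i j) (Copp (B i j)).
Definition mscale (a : C) (A : Mat) : Mat := fun i j => Cmul a (A i j).
Definition mmul (W : nat) (A B : Mat) : Mat :=
  fun i j => Csum W (fun k => Cmul (A i k) (B k j)).
Definition madj (A : Mat) : Mat := fun i j => Cconj (A j i).
Definition msum_list {T : Type} (l : list T) (f : T -> Mat) : Mat :=
  fold_right (fun t acc => madd (f t) acc) mzero l.
Definition meq (W : nat) (A B : Mat) : Prop :=
  forall i j, (i < W)%nat -> (j < W)%nat -> A i j = B i j.
Definition hermitian (W : nat) (A : Mat) : Prop :=
  forall i j, (i < W)%nat -> (j < W)%nat -> A i j = Cconj (A j i).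
Definition fnorm2 (W : nat) (A : Mat) : R :=
  Re (Csum W (fun i => Csum W (fun j => mkC (Cnorm2 (A i j)) 0))).
(** imaginary part  (A - A^* ) / (2 i) ;  1/(2i) = - i / 2 *)
Definition ImM (A : Mat) : Mat := mscale (mkC 0 (- / 2)) (msub A (madj A)).
Definition qform (W : nat) (A : Mat) (v : nat -> C) : C :=
  Csum W (fun i => Csum W (fun j => Cmul (Cmul (Cconj (v i)) (A i j)) (v j))).
Definition loewner_le (W : nat) (B A : Mat) : Prop :=
  forall v : nat -> C, Re (qform W B v) <= Re (qform W A v).

(** A vertex is a list of child indices (each < K), read from the vertex
   towards the root: the root 0 is [], the children of x are c :: x (c < K),
   and the parent of c :: x is x. *)
Definition vertex := list nat.
Definition valid (K : nat) (x : vertex) : Prop := Forall (fun c => (c < K)%nat) x.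
Definition children (K : nat) (x : vertex) : list vertex :=
  map (fun c => c :: x) (seq 0 K).
Fixpoint sphere (K n : nat) : list vertex :=
  match n with
  | O => [ [] ]
  | S m => flat_map (children K) (sphere K m)
  end.

(** For the operator H on l^2(T; C^W) with blocks I_W between adjacent vertices
   and U(x) on the diagonal, and Im z > 0, [is_root_resolvent K W U z G] says
   that x |-> G x is the row G(0, x; z) of (H - z)^{-1}: it is square summable
   and solves  sum_y G(0,y) (H - z)(y,x) = delta_{0 x} I_W  at every vertex x. *)
Definition parent_term (G : vertex -> Mat) (x : vertex) : Mat :=
  match x with [] => mzero | _ :: p => G p end.

Definition res_row_lhs (K W : nat) (U : vertex -> Mat) (z : C)
    (G : vertex -> Mat) (x : vertex) : Mat :=
  msub (madd (madd (mmul W (G x) (U x)) (parent_term G x))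
             (msum_list (children K x) G))
       (mscale z (G x)).

Definition is_root_resolvent (K W : nat) (U : vertex -> Mat) (z : C)
    (G : vertex -> Mat) : Prop :=
  (forall x, valid K x ->
     meq W (res_row_lhs K W U z G x)
           (match x with [] => mid | _ => mzero end))
  /\ exists M : R, forall n : nat,
       sum_f_R0 (fun m => fold_right (fun x acc => fnorm2 W (G x) + acc) 0
                                     (sphere K m)) n <= M.

(** Let [a = v^* G(0, .)], a square-summable row family on the tree solving
    [a (H - z) = v^* delta_0]. Pairing this equation with [a] and summing over the ball of
    radius [n] (the Ward identity), the parent and child terms cancel except across the
    sphere [S_n], so that
      [v^* Im G(0,0) v = eta * sum_(|x| <= n) |a(x)|^2
                           - sum_(x in S_n, y child of x) Im <a(y), a(x)>].
    Along an edge the resolvent factorizes, [G(0,y) = - G(0,x) Gamma(y)], since the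
    difference restricted to the subtree of [y] is a square-summable solution of the
    homogeneous equation, which vanishes by the Ward identity once more. Hence each flux
    term is [- v^* G(0,x) Im Gamma(y) G(0,x)^* v], and dropping the nonnegative
    [eta]-term gives the inequality. *)

From Pilot Require Import Defs.
From Stdlib Require Import Reals List Lra Lia Psatz.
(* Re-import so that [C] is the complex type of [Defs], not the binomial of [Reals]. *)
Import Defs.
Import ListNotations.
Open Scope R_scope.

Lemma C_ext (a b : C) : Re a = Re b -> Im a = Im b -> a = b.
Proof. destruct a, b; simpl; intros -> ->; reflexivity. Qed.

Definition Csub (a b : C) : C := Cadd a (Copp b).

Lemma C_ring : ring_theory C0 C1 Cadd Cmul Csub Copp (@eq C).
Proof. constructor; intros; apply C_ext; simpl; ring. Qed.
Add Ring C_ring : C_ring.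

Lemma Cconj_add a b : Cconj (Cadd a b) = Cadd (Cconj a) (Cconj b).
Proof. apply C_ext; simpl; ring. Qed.
Lemma Cconj_mul a b : Cconj (Cmul a b) = Cmul (Cconj a) (Cconj b).
Proof. apply C_ext; simpl; ring. Qed.
Lemma Cconj_involutive a : Cconj (Cconj a) = a.
Proof. apply C_ext; simpl; ring. Qed.

Lemma Cnorm2_ge0 a : 0 <= Cnorm2 a.
Proof. unfold Cnorm2; nra. Qed.
Lemma Cnorm2_mul a b : Cnorm2 (Cmul a b) = Cnorm2 a * Cnorm2 b.
Proof. destruct a, b; unfold Cnorm2; simpl; ring. Qed.
Lemma Cnorm2_add_le a b : Cnorm2 (Cadd a b) <= 2 * Cnorm2 a + 2 * Cnorm2 b.
Proof.
  destruct a as [p q], b as [r s]; unfold Cnorm2; simpl.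
  pose proof (Rle_0_sqr (p - r)); pose proof (Rle_0_sqr (q - s)); unfold Rsqr in *; lra.
Qed.
Lemma Cnorm2_eq0 a : Cnorm2 a <= 0 -> a = C0.
Proof.
  destruct a as [p q]; unfold Cnorm2; simpl; intros H.
  assert (p = 0) by nra; assert (q = 0) by nra; subst; reflexivity.
Qed.

Lemma Csum_ext n f g : (forall i, (i < n)%nat -> f i = g i) -> Csum n f = Csum n g.
Proof. induction n; simpl; intros H; auto. rewrite IHn, H; auto. Qed.
Lemma Csum_add n f g : Csum n (fun i => Cadd (f i) (g i)) = Cadd (Csum n f) (Csum n g).
Proof. induction n; simpl; [ring | rewrite IHn; ring]. Qed.
Lemma Csum_mull n c f : Csum n (fun i => Cmul c (f i)) = Cmul c (Csum n f).
Proof. induction n; simpl; [ring | rewrite IHn; ring]. Qed.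
Lemma Csum_mulr n c f : Csum n (fun i => Cmul (f i) c) = Cmul (Csum n f) c.
Proof. induction n; simpl; [ring | rewrite IHn; ring]. Qed.
Lemma Csum_opp n f : Csum n (fun i => Copp (f i)) = Copp (Csum n f).
Proof. induction n; simpl; [ring | rewrite IHn; ring]. Qed.
Lemma Csum_0 n : Csum n (fun _ => C0) = C0.
Proof. induction n; simpl; [ring | rewrite IHn; ring]. Qed.
Lemma Csum_swap n m f :
  Csum n (fun i => Csum m (fun j => f i j)) = Csum m (fun j => Csum n (fun i => f i j)).
Proof.
  induction n; simpl; [now rewrite Csum_0 |].
  rewrite IHn, <- Csum_add; reflexivity.
Qed.
Lemma Cconj_Csum n f : Cconj (Csum n f) = Csum n (fun i => Cconj (f i)).
Proof.
  induction n; simpl; [apply C_ext; simpl; ring |].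
  rewrite Cconj_add, IHn; reflexivity.
Qed.
Lemma Csum_mid n c l :
  Csum n (fun i => Cmul (c i) (mid i l)) = if Nat.ltb l n then c l else C0.
Proof.
  induction n; simpl; [reflexivity |]. rewrite IHn. unfold mid.
  destruct (Nat.eqb_spec n l), (Nat.ltb_spec l n), (Nat.ltb_spec l (S n));
    subst; try lia; ring.
Qed.

(** [Rsum n f] is [f 0 + ... + f (n-1)], unlike [sum_f_R0]. *)
Fixpoint Rsum (n : nat) (f : nat -> R) : R :=
  match n with O => 0 | S m => Rsum m f + f m end.

Lemma Re_Csum n f : Re (Csum n f) = Rsum n (fun i => Re (f i)).
Proof. induction n; simpl; auto. rewrite IHn; auto. Qed.
Lemma Im_Csum n f : Im (Csum n f) = Rsum n (fun i => Im (f i)).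
Proof. induction n; simpl; auto. rewrite IHn; auto. Qed.
Lemma Rsum_ext n f g : (forall i, (i < n)%nat -> f i = g i) -> Rsum n f = Rsum n g.
Proof. induction n; simpl; intros H; auto. rewrite IHn, H; auto. Qed.
Lemma Rsum_le n f g : (forall i, (i < n)%nat -> f i <= g i) -> Rsum n f <= Rsum n g.
Proof.
  induction n; simpl; intros H; [lra |].
  assert (f n <= g n) by auto. assert (Rsum n f <= Rsum n g) by auto. lra.
Qed.
Lemma Rsum_add n f g : Rsum n (fun i => f i + g i) = Rsum n f + Rsum n g.
Proof. induction n; simpl; [ring | rewrite IHn; ring]. Qed.
Lemma Rsum_scal n c f : Rsum n (fun i => c * f i) = c * Rsum n f.
Proof. induction n; simpl; [ring | rewrite IHn; ring]. Qed.
Lemma Rsum_0 n : Rsum n (fun _ => 0) = 0.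
Proof. induction n; simpl; [ring | rewrite IHn; ring]. Qed.
Lemma Rsum_swap n m f :
  Rsum n (fun i => Rsum m (fun j => f i j)) = Rsum m (fun j => Rsum n (fun i => f i j)).
Proof.
  induction n; simpl; [now rewrite Rsum_0 |].
  rewrite IHn, <- Rsum_add; reflexivity.
Qed.
Lemma Rsum_ge0 n f : (forall i, (i < n)%nat -> 0 <= f i) -> 0 <= Rsum n f.
Proof. intros H. rewrite <- (Rsum_0 n). apply Rsum_le; auto. Qed.
Lemma Rsum_term_le n f i :
  (forall i, (i < n)%nat -> 0 <= f i) -> (i < n)%nat -> f i <= Rsum n f.
Proof.
  induction n; simpl; intros H Hi; [lia |].
  assert (0 <= Rsum n f) by (apply Rsum_ge0; auto).
  destruct (Nat.eq_dec i n) as [-> | Hin]; [lra |].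
  assert (f i <= Rsum n f) by (apply IHn; auto; lia).
  assert (0 <= f n) by auto. lra.
Qed.

Definition lsum {T} (l : list T) (f : T -> C) : C :=
  fold_right (fun t acc => Cadd (f t) acc) C0 l.
Definition rsum {T} (l : list T) (f : T -> R) : R :=
  fold_right (fun t acc => f t + acc) 0 l.

Lemma lsum_map {T U} (g : T -> U) l f : lsum (map g l) f = lsum l (fun t => f (g t)).
Proof. induction l; simpl; auto. unfold lsum in *; simpl. rewrite IHl; auto. Qed.
Lemma lsum_add {T} (l : list T) f g :
  lsum l (fun t => Cadd (f t) (g t)) = Cadd (lsum l f) (lsum l g).
Proof. induction l; unfold lsum in *; simpl; [ring | rewrite IHl; ring]. Qed.
Lemma lsum_mull {T} (l : list T) c f : lsum l (fun t => Cmul c (f t)) = Cmul c (lsum l f).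
Proof. induction l; unfold lsum in *; simpl; [ring | rewrite IHl; ring]. Qed.
Lemma Im_lsum {T} (l : list T) f : Im (lsum l f) = rsum l (fun t => Im (f t)).
Proof. induction l; simpl; auto. rewrite <- IHl. reflexivity. Qed.
Lemma Csum_lsum {T} n (l : list T) g :
  Csum n (fun k => lsum l (fun t => g t k)) = lsum l (fun t => Csum n (g t)).
Proof.
  induction l; simpl; [apply Csum_0 |].
  unfold lsum in *; simpl. rewrite Csum_add, IHl. reflexivity.
Qed.

Lemma rsum_ext {T} (l : list T) f g : (forall t, In t l -> f t = g t) -> rsum l f = rsum l g.
Proof. induction l; simpl; intros H; auto. rewrite IHl, H; auto. Qed.
Lemma rsum_le {T} (l : list T) f g : (forall t, In t l -> f t <= g t) -> rsum l f <= rsum l g.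
Proof.
  induction l; simpl; intros H; [lra |].
  assert (f a <= g a) by auto. assert (rsum l f <= rsum l g) by auto. lra.
Qed.
Lemma rsum_add {T} (l : list T) f g : rsum l (fun t => f t + g t) = rsum l f + rsum l g.
Proof. induction l; simpl; [ring | rewrite IHl; ring]. Qed.
Lemma rsum_scal {T} (l : list T) c f : rsum l (fun t => c * f t) = c * rsum l f.
Proof. induction l; simpl; [ring | rewrite IHl; ring]. Qed.
Lemma rsum_opp {T} (l : list T) f : rsum l (fun t => - f t) = - rsum l f.
Proof. induction l; simpl; [ring | rewrite IHl; ring]. Qed.
Lemma rsum_const {T} (l : list T) c : rsum l (fun _ => c) = INR (length l) * c.
Proof. induction l; simpl length; [simpl; ring |]. rewrite S_INR; simpl; rewrite IHl; ring. Qed.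
Lemma rsum_app {T} (l1 l2 : list T) f : rsum (l1 ++ l2) f = rsum l1 f + rsum l2 f.
Proof. induction l1; simpl; [ring | rewrite IHl1; ring]. Qed.
Lemma rsum_flat_map {T U} (g : T -> list U) l f :
  rsum (flat_map g l) f = rsum l (fun t => rsum (g t) f).
Proof. induction l; simpl; auto. rewrite rsum_app, IHl; auto. Qed.
Lemma rsum_map {T U} (g : T -> U) l f : rsum (map g l) f = rsum l (fun t => f (g t)).
Proof. induction l; simpl; auto. rewrite IHl; auto. Qed.
Lemma rsum_ge0 {T} (l : list T) f : (forall t, In t l -> 0 <= f t) -> 0 <= rsum l f.
Proof. intros H. rewrite <- (Rmult_0_r (INR (length l))), <- rsum_const. apply rsum_le; auto. Qed.
Lemma rsum_In_le {T} (l : list T) f t :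
  (forall t, In t l -> 0 <= f t) -> In t l -> f t <= rsum l f.
Proof.
  induction l; simpl; intros H Hi; [contradiction |].
  assert (0 <= f a) by auto. assert (0 <= rsum l f) by (apply rsum_ge0; auto).
  destruct Hi as [-> | Hi]; [lra |]. assert (f t <= rsum l f) by auto. lra.
Qed.

Lemma sum_f_R0_scal c f N : sum_f_R0 (fun i => c * f i) N = c * sum_f_R0 f N.
Proof. induction N; simpl; [ring | rewrite IHN; ring]. Qed.

Lemma sum_ge_first (t : nat -> R) N : (forall m, 0 <= t m) -> t 0%nat <= sum_f_R0 t N.
Proof. intros H; induction N; simpl; [lra |]. specialize (H (S N)). lra. Qed.

Lemma sum_term_le (t : nat -> R) N : (forall m, 0 <= t m) -> t N <= sum_f_R0 t N.
Proof.
  intros H; destruct N; simpl; [lra |].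
  assert (0 <= sum_f_R0 t N) by (apply cond_pos_sum; auto). lra.
Qed.

Lemma summable_lower_bound_nonpos (t : nat -> R) (c k M : R) :
  (forall m, 0 <= t m) -> 0 <= k -> (forall N, sum_f_R0 t N <= M) ->
  (forall N, c <= t (S N) + k * t N) -> c <= 0.
Proof.
  intros Ht Hk HM Hc.
  assert (HL : forall L, c * INR (S L) <= M + k * M).
  { intros L. rewrite <- sum_cte.
    apply Rle_trans with (sum_f_R0 (fun N => t (S N) + k * t N) L); [apply sum_Rle; auto |].
    rewrite sum_plus, sum_f_R0_scal. apply Rplus_le_compat.
    - apply Rle_trans with (sum_f_R0 t (S L)); [| apply HM].
      rewrite (decomp_sum t (S L)) by lia. simpl pred. pose proof (Ht 0%nat). lra.
    - apply Rmult_le_compat_l; auto. }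
  destruct (Rle_lt_dec c 0) as [Hle | Hlt]; [exact Hle |].
  destruct (INR_archimed c (M + k * M) Hlt) as [n Hn].
  specialize (HL n). rewrite S_INR in HL. lra.
Qed.

Definition row := nat -> C.
Definition vconj (v : row) : row := fun i => Cconj (v i).
Definition dot (W : nat) (a b : row) : C := Csum W (fun k => Cmul (a k) (Cconj (b k))).
Definition norm2 (W : nat) (a : row) : R := Rsum W (fun k => Cnorm2 (a k)).
Definition vmul (W : nat) (a : row) (M : Mat) : row :=
  fun k => Csum W (fun l => Cmul (a l) (M l k)).

Section Rows.
Variable W : nat.

Lemma dot_extl a a' b : (forall k, (k < W)%nat -> a k = a' k) -> dot W a b = dot W a' b.
Proof. intros H; apply Csum_ext; intros; rewrite H; auto. Qed.

Lemma dot_addl a b c : dot W (fun k => Cadd (a k) (b k)) c = Cadd (dot W a c) (dot W b c).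
Proof. unfold dot. rewrite <- Csum_add. apply Csum_ext; intros; ring. Qed.
Lemma dot_oppl a c : dot W (fun k => Copp (a k)) c = Copp (dot W a c).
Proof. unfold dot. rewrite <- Csum_opp. apply Csum_ext; intros; ring. Qed.
Lemma dot_scalel s a c : dot W (fun k => Cmul s (a k)) c = Cmul s (dot W a c).
Proof. unfold dot. rewrite <- Csum_mull. apply Csum_ext; intros; ring. Qed.
Lemma dot_0l c : dot W (fun _ => C0) c = C0.
Proof.
  unfold dot. transitivity (Csum W (fun _ => C0)); [apply Csum_ext; intros; ring | apply Csum_0].
Qed.
Lemma dot_lsuml {T} (l : list T) g c :
  dot W (fun k => lsum l (fun t => g t k)) c = lsum l (fun t => dot W (g t) c).
Proof.
  unfold dot. rewrite <- Csum_lsum. apply Csum_ext; intros.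
  induction l; unfold lsum in *; simpl; [ring | rewrite <- IHl; ring].
Qed.

Lemma dot_sym a b : dot W b a = Cconj (dot W a b).
Proof.
  unfold dot. rewrite Cconj_Csum. apply Csum_ext; intros.
  rewrite Cconj_mul, Cconj_involutive; ring.
Qed.

Lemma Im_dot_sym a b : Im (dot W b a) = - Im (dot W a b).
Proof. rewrite dot_sym. reflexivity. Qed.

Lemma dot_self a : dot W a a = mkC (norm2 W a) 0.
Proof.
  apply C_ext; unfold dot, norm2; simpl; rewrite ?Re_Csum, ?Im_Csum.
  - apply Rsum_ext; intros; unfold Cnorm2; simpl; ring.
  - rewrite <- (Rsum_0 W). apply Rsum_ext; intros; simpl; ring.
Qed.

Lemma norm2_ge0 a : 0 <= norm2 W a.
Proof. apply Rsum_ge0; intros; apply Cnorm2_ge0. Qed.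

Lemma Cnorm2_le_norm2 a k : (k < W)%nat -> Cnorm2 (a k) <= norm2 W a.
Proof. intros Hk. apply (Rsum_term_le W (fun k => Cnorm2 (a k))); auto using Cnorm2_ge0. Qed.

Lemma norm2_add_le a b : norm2 W (fun k => Cadd (a k) (b k)) <= 2 * norm2 W a + 2 * norm2 W b.
Proof.
  unfold norm2. rewrite <- !Rsum_scal, <- Rsum_add.
  apply Rsum_le; intros; apply Cnorm2_add_le.
Qed.

Lemma Im_dot_le a b : Im (dot W a b) <= (norm2 W a + norm2 W b) / 2.
Proof.
  unfold dot, norm2. rewrite Im_Csum.
  replace ((Rsum W (fun k => Cnorm2 (a k)) + Rsum W (fun k => Cnorm2 (b k))) / 2)
    with (Rsum W (fun k => / 2 * (Cnorm2 (a k) + Cnorm2 (b k))))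
    by (rewrite Rsum_scal, Rsum_add; field).
  apply Rsum_le; intros k _. unfold Cnorm2.
  destruct (a k) as [p q], (b k) as [r s]; simpl.
  pose proof (Rle_0_sqr (p + s)); pose proof (Rle_0_sqr (q - r)); unfold Rsqr in *; lra.
Qed.

Lemma Im_dot_vmul_hermitian a M : hermitian W M -> Im (dot W (vmul W a M) a) = 0.
Proof.
  intros HM. set (q := dot W (vmul W a M) a).
  assert (Hq : Cconj q = q).
  { unfold q, dot, vmul. rewrite Cconj_Csum.
    transitivity (Csum W (fun k => Csum W (fun l => Cmul (Cmul (Cconj (a l)) (M k l)) (a k)))).
    - apply Csum_ext; intros k Hk.
      rewrite Cconj_mul, Cconj_involutive, Cconj_Csum, <- Csum_mulr.
      apply Csum_ext; intros l Hl. rewrite Cconj_mul, (HM l k), Cconj_involutive by auto. ring.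
    - rewrite Csum_swap. apply Csum_ext; intros k Hk.
      rewrite <- Csum_mulr. apply Csum_ext; intros; ring. }
  destruct q as [qr qi]. injection Hq. simpl. lra.
Qed.

Lemma vmul_mmul a A B k : vmul W a (mmul W A B) k = vmul W (vmul W a A) B k.
Proof.
  unfold vmul, mmul.
  rewrite (Csum_ext W _ (fun i => Csum W (fun p => Cmul (a i) (Cmul (A i p) (B p k)))))
    by (intros; rewrite Csum_mull; reflexivity).
  rewrite Csum_swap. apply Csum_ext; intros. rewrite <- Csum_mulr.
  apply Csum_ext; intros; ring.
Qed.

Lemma dot_vmul_adj a b A : dot W (vmul W a (madj A)) b = dot W a (vmul W b A).
Proof.
  unfold dot, vmul, madj.
  rewrite (Csum_ext W _
             (fun k => Csum W (fun j => Cmul (a j) (Cmul (Cconj (A k j)) (Cconj (b k))))))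
    by (intros; rewrite <- Csum_mulr; apply Csum_ext; intros; ring).
  rewrite Csum_swap. apply Csum_ext; intros j Hj.
  rewrite Cconj_Csum, <- Csum_mull. apply Csum_ext; intros. rewrite Cconj_mul; ring.
Qed.

Lemma Re_dot_vmul_ImM a M : Re (dot W (vmul W a (ImM M)) a) = Im (dot W (vmul W a M) a).
Proof.
  assert (E : dot W (vmul W a (ImM M)) a =
     Cmul (mkC 0 (- / 2)) (Cadd (dot W (vmul W a M) a) (Copp (dot W (vmul W a (madj M)) a)))).
  { rewrite <- dot_oppl, <- dot_addl, <- dot_scalel. apply dot_extl; intros k _.
    unfold ImM, mscale, msub, vmul. rewrite <- Csum_opp, <- Csum_add, <- Csum_mull.
    apply Csum_ext; intros; ring. }
  rewrite E, dot_vmul_adj, dot_sym. destruct (dot W (vmul W a M) a) as [p q]. simpl. field.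
Qed.

Lemma Csum_Cnorm2_le n f : Cnorm2 (Csum n f) <= 2 ^ n * Rsum n (fun i => Cnorm2 (f i)).
Proof.
  induction n; simpl; [unfold Cnorm2; simpl; lra |].
  eapply Rle_trans; [apply Cnorm2_add_le |].
  assert (1 <= 2 ^ n) by (apply pow_R1_Rle; lra).
  pose proof (Cnorm2_ge0 (f n)).
  assert (0 <= Rsum n (fun i => Cnorm2 (f i))) by (apply Rsum_ge0; intros; apply Cnorm2_ge0).
  nra.
Qed.

Lemma fnorm2_Rsum A : fnorm2 W A = Rsum W (fun i => Rsum W (fun j => Cnorm2 (A i j))).
Proof. unfold fnorm2. rewrite Re_Csum. apply Rsum_ext; intros. now rewrite Re_Csum. Qed.

Lemma norm2_vmul_le a B : norm2 W (vmul W a B) <= 2 ^ W * norm2 W a * fnorm2 W B.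
Proof.
  unfold norm2 at 1. rewrite fnorm2_Rsum, Rsum_swap, <- Rsum_scal.
  apply Rsum_le; intros l Hl.
  eapply Rle_trans; [apply Csum_Cnorm2_le |].
  rewrite Rmult_assoc. apply Rmult_le_compat_l; [apply pow_le; lra |].
  rewrite <- Rsum_scal. apply Rsum_le; intros j Hj. rewrite Cnorm2_mul.
  apply Rmult_le_compat_r; [apply Cnorm2_ge0 | apply Cnorm2_le_norm2; auto].
Qed.

End Rows.

(** * The tree and the row operator *)

Lemma in_children K x y : In y (children K x) -> exists c, (c < K)%nat /\ y = c :: x.
Proof.
  unfold children; intros Hy. apply in_map_iff in Hy as [c [<- Hc]].
  apply in_seq in Hc. exists c; split; [lia | reflexivity].
Qed.

Lemma children_length K x : length (children K x) = K.
Proof. unfold children. now rewrite length_map, length_seq. Qed.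

Lemma sphere_valid K m x : In x (sphere K m) -> valid K x.
Proof.
  revert x; induction m; simpl; intros x Hx.
  - destruct Hx as [<- | []]. constructor.
  - apply in_flat_map in Hx as [p [Hp Hx]].
    apply in_children in Hx as [c [Hc ->]]. constructor; [exact Hc | exact (IHm p Hp)].
Qed.

Lemma valid_in_sphere K x : valid K x -> In x (sphere K (length x)).
Proof.
  induction 1; simpl; [auto |]. apply in_flat_map. exists l; split; [auto |].
  unfold children. apply in_map_iff. exists x; split; [reflexivity | apply in_seq; lia].
Qed.

Lemma sphere_S_nonroot K m x : In x (sphere K (S m)) -> x <> [].
Proof.
  simpl; intros Hx. apply in_flat_map in Hx as [p [_ Hx]].
  apply in_children in Hx as [c [_ ->]]. discriminate.
Qed.

Lemma rsum_sphere_add K L m (g : vertex -> R) :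
  rsum (sphere K (m + L)) g = rsum (sphere K L) (fun y => rsum (sphere K m) (fun w => g (w ++ y))).
Proof.
  revert g; induction m; intros g; simpl.
  - apply rsum_ext; intros. simpl. ring.
  - rewrite rsum_flat_map, IHm. apply rsum_ext; intros y _.
    rewrite rsum_flat_map. apply rsum_ext; intros w _.
    unfold children. now rewrite !rsum_map.
Qed.

Lemma rsum_sphere_shift_le K m y (g : vertex -> R) :
  (forall t, 0 <= g t) -> valid K y ->
  rsum (sphere K m) (fun w => g (w ++ y)) <= rsum (sphere K (m + length y)) g.
Proof.
  intros Hg Hy. rewrite rsum_sphere_add.
  apply (rsum_In_le _ (fun y => rsum (sphere K m) (fun w => g (w ++ y))));
    [intros; apply rsum_ge0; auto | apply valid_in_sphere; auto].
Qed.

Definition parent_row (f : vertex -> row) (x : vertex) : row :=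
  match x with [] => fun _ => C0 | _ :: p => f p end.

(** [row_op f] is the row family [f] multiplied on the right by [H - z]. *)
Definition row_op K W (U : vertex -> Mat) (z : C) (f : vertex -> row) (x : vertex) : row :=
  fun k => Cadd (Cadd (Cadd (vmul W (f x) (U x) k) (parent_row f x k))
                      (lsum (children K x) (fun c => f c k)))
                (Copp (Cmul z (f x k))).

Section RowOperator.
Variables (K W : nat) (U : vertex -> Mat) (z : C).

Lemma res_row_lhs_row_op G x i k :
  res_row_lhs K W U z G x i k = row_op K W U z (fun x l => G x i l) x k.
Proof.
  unfold res_row_lhs, row_op, msub, madd, mscale, mmul, vmul.
  assert (E : forall l : list vertex, msum_list l G i k = lsum l (fun c => G c i k)).
  { induction l; simpl; [reflexivity |]. unfold lsum in *; simpl. now rewrite <- IHl. }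
  rewrite E. destruct x; reflexivity.
Qed.

Lemma row_op_add f g x k :
  row_op K W U z (fun x l => Cadd (f x l) (g x l)) x k
  = Cadd (row_op K W U z f x k) (row_op K W U z g x k).
Proof.
  unfold row_op, vmul.
  rewrite (Csum_ext W _ (fun l => Cadd (Cmul (f x l) (U x l k)) (Cmul (g x l) (U x l k))))
    by (intros; ring).
  rewrite Csum_add, lsum_add.
  destruct x; simpl; ring.
Qed.

Lemma row_op_vmul r G x k :
  row_op K W U z (fun x => vmul W r (G x)) x k
  = Csum W (fun i => Cmul (r i) (row_op K W U z (fun x l => G x i l) x k)).
Proof.
  unfold row_op.
  assert (Hdiag : vmul W (vmul W r (G x)) (U x) k
                  = Csum W (fun i => Cmul (r i) (vmul W (fun l => G x i l) (U x) k))).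
  { unfold vmul.
    rewrite (Csum_ext W _ (fun l => Csum W (fun i => Cmul (r i) (Cmul (G x i l) (U x l k)))))
      by (intros; rewrite <- Csum_mulr; apply Csum_ext; intros; ring).
    rewrite Csum_swap. apply Csum_ext; intros. now rewrite Csum_mull. }
  assert (Hparent : parent_row (fun x => vmul W r (G x)) x k
                   = Csum W (fun i => Cmul (r i) (parent_row (fun x l => G x i l) x k))).
  { destruct x; simpl; [| reflexivity].
    rewrite <- (Csum_0 W) at 1. apply Csum_ext; intros; ring. }
  assert (Hchildren : lsum (children K x) (fun c => vmul W r (G c) k)
                     = Csum W (fun i => Cmul (r i) (lsum (children K x) (fun c => G c i k)))).
  { unfold vmul. rewrite <- (Csum_lsum W (children K x) (fun c i => Cmul (r i) (G c i k))).
    apply Csum_ext; intros. apply lsum_mull. }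
  rewrite Hdiag, Hparent, Hchildren. unfold vmul at 2.
  rewrite <- Csum_mull, <- Csum_opp, <- !Csum_add. apply Csum_ext; intros; ring.
Qed.

Lemma row_op_resolvent_row G r x k :
  is_root_resolvent K W U z G -> valid K x -> (k < W)%nat ->
  row_op K W U z (fun x => vmul W r (G x)) x k = match x with [] => r k | _ => C0 end.
Proof.
  intros [HG _] Hx Hk. rewrite row_op_vmul.
  rewrite (Csum_ext W _ (fun i => Cmul (r i) ((match x with [] => mid | _ => mzero end) i k)))
    by (intros i Hi; rewrite <- res_row_lhs_row_op, HG; auto).
  destruct x.
  - rewrite Csum_mid. destruct (Nat.ltb_spec k W); [reflexivity | lia].
  - rewrite <- (Csum_0 W). apply Csum_ext; intros; unfold mzero; ring.
Qed.

Lemma dot_row_op f x b :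
  dot W (row_op K W U z f x) b =
  Cadd (Cadd (Cadd (dot W (vmul W (f x) (U x)) b) (dot W (parent_row f x) b))
             (lsum (children K x) (fun c => dot W (f c) b)))
       (Copp (Cmul z (dot W (f x) b))).
Proof.
  unfold row_op. rewrite !dot_addl, dot_oppl, dot_scalel.
  now rewrite (dot_lsuml W (children K x) (fun c k => f c k)).
Qed.

Lemma Im_dot_row_op f x :
  hermitian W (U x) ->
  Im (dot W (row_op K W U z f x) (f x))
  = - Im z * norm2 W (f x) + Im (dot W (parent_row f x) (f x))
    + rsum (children K x) (fun c => Im (dot W (f c) (f x))).
Proof.
  intros HU. rewrite dot_row_op. simpl Im.
  rewrite Im_lsum, Im_dot_vmul_hermitian, dot_self by auto. simpl. ring.
Qed.

End RowOperator.

Lemma row_op_shift K W U z f y w k :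
  row_op K W (fun w => U (w ++ y)) z (fun w l => f (w ++ y) l) w k
  = Cadd (row_op K W U z f (w ++ y) k) (Copp (match w with [] => parent_row f y k | _ => C0 end)).
Proof.
  assert (Hch : lsum (children K w) (fun c => f (c ++ y) k)
                = lsum (children K (w ++ y)) (fun c => f c k))
    by (unfold children; now rewrite !lsum_map).
  unfold row_op, vmul. rewrite Hch. destruct w; simpl; ring.
Qed.

(** * The Ward identity and uniqueness of square-summable solutions *)

Definition sphere_mass K W (f : vertex -> row) (m : nat) : R :=
  rsum (sphere K m) (fun x => norm2 W (f x)).

Definition flux K W (f : vertex -> row) (N : nat) : R :=
  rsum (sphere K N) (fun x => rsum (children K x) (fun c => Im (dot W (f c) (f x)))).

Definition sq_summable K W (f : vertex -> row) : Prop :=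
  exists M, forall N, sum_f_R0 (sphere_mass K W f) N <= M.

Lemma sphere_mass_ge0 K W f m : 0 <= sphere_mass K W f m.
Proof. apply rsum_ge0; intros; apply norm2_ge0. Qed.

Lemma rsum_parent_dot K W f m :
  rsum (sphere K (S m)) (fun x => Im (dot W (parent_row f x) (f x))) = - flux K W f m.
Proof.
  unfold flux; simpl sphere. rewrite rsum_flat_map, <- rsum_opp.
  apply rsum_ext; intros p _. unfold children. rewrite !rsum_map, <- rsum_opp.
  apply rsum_ext; intros c _. apply Im_dot_sym.
Qed.

Lemma ward_identity K W U z f s :
  (forall x, valid K x -> hermitian W (U x)) ->
  (forall x, valid K x -> forall k, (k < W)%nat -> row_op K W U z f x k = s x k) ->
  forall N, sum_f_R0 (fun m => rsum (sphere K m) (fun x => Im (dot W (s x) (f x)))) N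
            = - Im z * sum_f_R0 (sphere_mass K W f) N + flux K W f N.
Proof.
  intros hU hf.
  assert (Hm : forall m, rsum (sphere K m) (fun x => Im (dot W (s x) (f x)))
     = - Im z * sphere_mass K W f m
       + rsum (sphere K m) (fun x => Im (dot W (parent_row f x) (f x))) + flux K W f m).
  { intros m. unfold sphere_mass, flux. rewrite <- rsum_scal, <- !rsum_add.
    apply rsum_ext; intros x Hx. apply sphere_valid in Hx.
    rewrite <- (Im_dot_row_op K W U z f x) by auto. f_equal.
    apply dot_extl; intros k Hk. symmetry; auto. }
  induction N.
  - specialize (Hm 0%nat). simpl in *. rewrite dot_0l in Hm. simpl in Hm. lra.
  - rewrite !tech5, IHN, Hm, rsum_parent_dot. ring.
Qed.

Lemma flux_le K W f N :
  flux K W f N <= (sphere_mass K W f (S N) + INR K * sphere_mass K W f N) / 2.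
Proof.
  unfold flux, sphere_mass. simpl sphere at 2. rewrite rsum_flat_map.
  apply Rle_trans with
    (rsum (sphere K N) (fun x =>
       rsum (children K x) (fun c => (norm2 W (f c) + norm2 W (f x)) / 2))).
  { apply rsum_le; intros; apply rsum_le; intros; apply Im_dot_le. }
  apply Req_le.
  transitivity (rsum (sphere K N) (fun x =>
    / 2 * rsum (children K x) (fun c => norm2 W (f c)) + / 2 * INR K * norm2 W (f x))).
  - apply rsum_ext; intros x _.
    rewrite (rsum_ext _ _ (fun c => / 2 * norm2 W (f c) + / 2 * norm2 W (f x))) by (intros; field).
    rewrite rsum_add, rsum_scal, rsum_const, children_length. ring.
  - rewrite rsum_add, !rsum_scal. field.
Qed.

(** On a tree with [Im z > 0], [f (H - z) = 0] has no nonzero square-summable solution: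
    the Ward identity bounds [Im z |f(0)|^2] by the flux through arbitrarily far
    spheres, which summability makes arbitrarily small on average. *)
Lemma row_op_kernel_root K W U z f :
  (forall x, valid K x -> hermitian W (U x)) -> 0 < Im z ->
  (forall x, valid K x -> forall k, (k < W)%nat -> row_op K W U z f x k = C0) ->
  sq_summable K W f -> forall k, (k < W)%nat -> f [] k = C0.
Proof.
  intros hU hz hf [M HM] k Hk.
  assert (Hflux : forall N, Im z * sum_f_R0 (sphere_mass K W f) N = flux K W f N).
  { intros N. pose proof (ward_identity K W U z f (fun _ _ => C0) hU hf N) as Hw.
    rewrite (sum_eq _ (fun _ => 0)), sum_cte in Hw; [lra |].
    intros m _. rewrite (rsum_ext _ _ (fun _ => 0)) by (intros; now rewrite dot_0l).
    rewrite rsum_const. ring. }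
  assert (Hroot : 2 * Im z * sphere_mass K W f 0 <= 0).
  { apply (summable_lower_bound_nonpos (sphere_mass K W f) _ (INR K) M);
      auto using sphere_mass_ge0, pos_INR.
    intros N. pose proof (flux_le K W f N) as Hle. rewrite <- Hflux in Hle.
    assert (sphere_mass K W f 0 <= sum_f_R0 (sphere_mass K W f) N)
      by (apply sum_ge_first, sphere_mass_ge0).
    nra. }
  apply Cnorm2_eq0.
  pose proof (sphere_mass_ge0 K W f 0). pose proof (Cnorm2_le_norm2 W (f []) k Hk).
  unfold sphere_mass in *; simpl in *. nra.
Qed.

Lemma sq_summable_add K W f g :
  sq_summable K W f -> sq_summable K W g -> sq_summable K W (fun x l => Cadd (f x l) (g x l)).
Proof.
  intros [M1 H1] [M2 H2]. exists (2 * M1 + 2 * M2); intros N.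
  apply Rle_trans with (sum_f_R0 (fun m => 2 * sphere_mass K W f m + 2 * sphere_mass K W g m) N).
  - apply sum_Rle; intros m _. unfold sphere_mass.
    rewrite <- !rsum_scal, <- rsum_add. apply rsum_le; intros; apply norm2_add_le.
  - rewrite sum_plus, !sum_f_R0_scal. specialize (H1 N); specialize (H2 N). lra.
Qed.

Lemma sq_summable_shift K W f y :
  valid K y -> sq_summable K W f -> sq_summable K W (fun w => f (w ++ y)).
Proof.
  intros Hy [M HM]. exists M; intros N. eapply Rle_trans; [| apply (HM (N + length y)%nat)].
  apply Rle_trans with (sum_f_R0 (fun m => sphere_mass K W f (m + length y)) N).
  - apply sum_Rle; intros m _.
    apply (rsum_sphere_shift_le K m y (fun w => norm2 W (f w))); auto using norm2_ge0.
  - induction N; simpl.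
    + apply sum_term_le, sphere_mass_ge0.
    + pose proof (sphere_mass_ge0 K W f (S (N + length y))). lra.
Qed.

Lemma sq_summable_resolvent_row K W U z G r :
  is_root_resolvent K W U z G -> sq_summable K W (fun x => vmul W r (G x)).
Proof.
  intros [_ [M HM]]. exists (2 ^ W * norm2 W r * M); intros N.
  assert (Hc : 0 <= 2 ^ W * norm2 W r)
    by (apply Rmult_le_pos; [apply pow_le; lra | apply norm2_ge0]).
  apply Rle_trans with
    (sum_f_R0 (fun m => 2 ^ W * norm2 W r * rsum (sphere K m) (fun x => fnorm2 W (G x))) N).
  - apply sum_Rle; intros m _. unfold sphere_mass. rewrite <- rsum_scal.
    apply rsum_le; intros; apply norm2_vmul_le.
  - rewrite sum_f_R0_scal. apply Rmult_le_compat_l; [exact Hc | apply HM].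
Qed.

(** * Factorization along an edge and the main inequality *)

Lemma resolvent_row_child K W U z G0 Gy x c r k :
  (forall x, valid K x -> hermitian W (U x)) -> 0 < Im z ->
  is_root_resolvent K W U z G0 -> valid K (c :: x) ->
  is_root_resolvent K W (fun w => U (w ++ c :: x)) z Gy -> (k < W)%nat ->
  vmul W r (G0 (c :: x)) k = Copp (vmul W (vmul W r (G0 x)) (Gy []) k).
Proof.
  intros hU hz hG0 hy hGy hk.
  set (y := c :: x) in *.
  set (a := fun w => vmul W r (G0 w)).
  set (d := fun w l => Cadd (vmul W (a x) (Gy w) l) (a (w ++ y) l)).
  assert (hUy : forall w, valid K w -> hermitian W (U (w ++ y)))
    by (intros w Hw; apply hU, Forall_app; auto).
  assert (Hd : forall w, valid K w -> forall l, (l < W)%nat ->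
                 row_op K W (fun w => U (w ++ y)) z d w l = C0).
  { intros w Hw l Hl. unfold d.
    rewrite row_op_add, (row_op_resolvent_row K W _ z Gy) by auto.
    rewrite (row_op_shift K W U z a y w l).
    rewrite (row_op_resolvent_row K W U z G0 r (w ++ y)) by (auto; apply Forall_app; auto).
    destruct w; simpl; ring. }
  assert (Hsum : sq_summable K W d).
  { apply sq_summable_add.
    - apply (sq_summable_resolvent_row K W (fun w => U (w ++ y)) z Gy); auto.
    - apply sq_summable_shift; auto. apply (sq_summable_resolvent_row K W U z G0); auto. }
  pose proof (row_op_kernel_root K W _ z d hUy hz Hd Hsum k hk) as Hroot.
  unfold d in Hroot; simpl in Hroot.
  set (p := vmul W (a x) (Gy []) k) in *.
  change (a y k = Copp p).
  replace (a y k) with (Cadd (Cadd p (a y k)) (Copp p)) by ring.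
  rewrite Hroot; ring.
Qed.

Lemma ward_root_source K W f r n :
  sum_f_R0 (fun m => rsum (sphere K m) (fun x =>
      Im (dot W (fun k => match x with [] => r k | _ => C0 end) (f x)))) n
  = Im (dot W r (f [])).
Proof.
  induction n; [simpl; apply Rplus_0_r |].
  rewrite tech5, IHn, (rsum_ext _ _ (fun _ => 0)), rsum_const; [ring |].
  intros x Hx. destruct x; [now apply sphere_S_nonroot in Hx |]. now rewrite dot_0l.
Qed.

Lemma qform_dot W B v : qform W B v = dot W (vmul W (vconj v) B) (vconj v).
Proof.
  unfold qform, dot, vmul, vconj. rewrite Csum_swap. apply Csum_ext; intros j Hj.
  rewrite Cconj_involutive, <- Csum_mulr. reflexivity.
Qed.

Lemma qform_madd W A B v : qform W (madd A B) v = Cadd (qform W A v) (qform W B v).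
Proof.
  unfold qform, madd. rewrite <- Csum_add. apply Csum_ext; intros.
  rewrite <- Csum_add. apply Csum_ext; intros. ring.
Qed.

Lemma qform_mzero W v : qform W mzero v = C0.
Proof.
  unfold qform, mzero. transitivity (Csum W (fun _ => C0)); [| apply Csum_0].
  apply Csum_ext; intros. transitivity (Csum W (fun _ => C0)); [| apply Csum_0].
  apply Csum_ext; intros. ring.
Qed.

Lemma Re_qform_msum_list {T} W (l : list T) F v :
  Re (qform W (msum_list l F) v) = rsum l (fun t => Re (qform W (F t) v)).
Proof.
  induction l; simpl; [now rewrite qform_mzero |].
  rewrite qform_madd. simpl. now rewrite IHl.
Qed.

Lemma Re_qform_ImM W M v :
  Re (qform W (ImM M) v) = - Im (dot W (vconj v) (vmul W (vconj v) M)).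
Proof. rewrite qform_dot, Re_dot_vmul_ImM, Im_dot_sym. ring. Qed.

Lemma Re_qform_sandwich W A M v :
  Re (qform W (mmul W (mmul W A (ImM M)) (madj A)) v)
  = Im (dot W (vmul W (vmul W (vconj v) A) M) (vmul W (vconj v) A)).
Proof.
  rewrite qform_dot, (dot_extl W _ (vmul W (vmul W (vmul W (vconj v) A) (ImM M)) (madj A)))
    by (intros; rewrite vmul_mmul; apply Csum_ext; intros; now rewrite vmul_mmul).
  now rewrite dot_vmul_adj, Re_dot_vmul_ImM.
Qed.

Lemma Re_qform_flux K W U z G0 Gam n v :
  (forall x, valid K x -> hermitian W (U x)) -> 0 < Im z ->
  is_root_resolvent K W U z G0 ->
  (forall y, valid K y -> y <> [] -> is_root_resolvent K W (fun w => U (w ++ y)) z (Gam y)) ->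
  Re (qform W (msum_list (sphere K n) (fun x =>
        msum_list (children K x) (fun y =>
          mmul W (mmul W (G0 x) (ImM (Gam y []))) (madj (G0 x))))) v)
  = - flux K W (fun x => vmul W (vconj v) (G0 x)) n.
Proof.
  intros hU hz hG0 hGam. set (a := fun x => vmul W (vconj v) (G0 x)).
  rewrite Re_qform_msum_list. unfold flux. rewrite <- rsum_opp.
  apply rsum_ext; intros x Hx. rewrite Re_qform_msum_list, <- rsum_opp.
  apply rsum_ext; intros y Hy. apply in_children in Hy as [c [Hc ->]].
  assert (Hcx : valid K (c :: x)) by (constructor; [exact Hc | eapply sphere_valid; eauto]).
  rewrite Re_qform_sandwich, (dot_extl W _ (fun k => Copp (a (c :: x) k))), dot_oppl;
    [reflexivity |].
  intros k Hk. unfold a.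
  rewrite (resolvent_row_child K W U z G0 (Gam (c :: x)) x c (vconj v) k); auto.
  - ring.
  - apply hGam; [exact Hcx | discriminate].
Qed.

Theorem lemmal (K W : nat) (hK : (2 <= K)%nat)
  (U : vertex -> Mat) (hU : forall x, valid K x -> hermitian W (U x))
  (E eta : R) (heta : 0 < eta) (n : nat)
  (G0 : vertex -> Mat)
  (hG0 : is_root_resolvent K W U (mkC E eta) G0)
  (Gam : vertex -> vertex -> Mat)
  (hGam : forall y, valid K y -> y <> [] ->
     is_root_resolvent K W (fun w => U (w ++ y)) (mkC E eta) (Gam y)) :
  loewner_le W
    (msum_list (sphere K n) (fun x =>
       msum_list (children K x) (fun y =>
         mmul W (mmul W (G0 x) (ImM (Gam y []))) (madj (G0 x)))))
    (ImM (G0 [])).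
Proof.
  intros v.
  set (z := mkC E eta) in *.
  set (a := fun x => vmul W (vconj v) (G0 x)).
  assert (hz : 0 < Im z) by (simpl; lra).
  pose proof (ward_identity K W U z a
    (fun x k => match x with [] => vconj v k | _ => C0 end) hU
    (fun x Hx k Hk => row_op_resolvent_row K W U z G0 (vconj v) x k hG0 Hx Hk) n) as Hward.
  cbv beta in Hward. rewrite ward_root_source in Hward.
  rewrite (Re_qform_flux K W U z) by auto. rewrite Re_qform_ImM.
  assert (0 <= sum_f_R0 (sphere_mass K W a) n)
    by (apply cond_pos_sum; intros; apply sphere_mass_ge0).
  fold a. fold (a []). nra.
Qed.
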